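(* Let $c=2-\sqrt2$ and define $f:[0,c]\to\mathbb{R}$ by $$f(x)=\tfrac12\big(\ln(1-x)+\ln(1-c+x)\big)+\frac{1}{\sqrt2\,(x-1)}+\frac{2+\sqrt2-\ln(1-c)}{2}.$$ Then $f$ is a strictly decreasing bijection from $[0,c]$ onto $[0,1]$ with $f(0)=1$ and $f(c)=0$. Let $\tau=f^{-1}:[0,1]\to[0,c]$ and $h:[0,1]\to[0,1]$, $h(x)=f(c-f^{-1}(x))$ (so $h$ is decreasing with $h(0)=1$, $h(1)=0$). Then for all $x\in[0,1]$, $$\int_0^x\frac{1-\tau(y)}{1-y+h(y)}\,dy=c-\tau(x),\qquad \int_0^1\tau(y)\,dy=1-c,\qquad \int_0^1\frac{1}{1-y+h(y)}\,dy<1.$$ *)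

From Stdlib Require Import Reals.
Open Scope R_scope.

Definition cc : R := 2 - sqrt 2.

Definition ff (x : R) : R :=
  / 2 * (ln (1 - x) + ln (1 - cc + x)) + / (sqrt 2 * (x - 1))
  + (2 + sqrt 2 - ln (1 - cc)) / 2.

Definition hh (tau : R -> R) (y : R) : R := ff (cc - tau y).

(* Improper Riemann integral over [0,1) (integrand possibly unbounded near 1):
   g is Riemann integrable on every [0,b], 0 <= b < 1, and
   lim_{b -> 1^-} int_0^b g = l. *)
Definition improper_int_0_1 (g : R -> R) (l : R) : Prop :=
  (forall b, 0 <= b < 1 -> inhabited (Riemann_integrable g 0 b)) /\
  (forall eps, 0 < eps -> exists delta, 0 < delta /\
     forall b (pr : Riemann_integrable g 0 b),
       1 - delta < b < 1 -> Rabs (RiemannInt pr - l) < eps).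

Definition riemann_int_eq (g : R -> R) (a b l : R) : Prop :=
  exists pr : Riemann_integrable g a b, RiemannInt pr = l.

From Coquelicot Require Import Coquelicot.
From Stdlib Require Import Reals Lra Nsatz ClassicalEpsilon Ranalysis5.
Open Scope R_scope.

(* Substituting [y = ff t] makes all three integrals elementary.  The
   logarithms of [ff] cancel in [1 - ff t + ff (cc - t)], which equals
   [t (2 - t) / ((1 - t) (1 - cc + t))], while
   [ff' t = t (t - 2) / ((1 - t)^2 (1 - cc + t))]; so the first integrand
   becomes [- dt] and the third [- dt / (1 - t)], and the integral of
   [tau = ff^-1] is that of [ff] over [[0, cc]], computed from an explicit
   primitive.  The substitution only needs [tau] continuous, as the inverse of
   any continuous strictly decreasing function is; continuity of [tau] at [1]
   also turns the proper integrals into the improper ones.  The final bound is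
   [- ln (1 - cc) = ln (1 + sqrt 2) < 1]. *)

Lemma continuity_pt_eps_delta (f : R -> R) (x : R) :
  (forall eps, 0 < eps -> exists d, 0 < d /\
     forall y, Rabs (y - x) < d -> Rabs (f y - f x) < eps) ->
  continuity_pt f x.
Proof.
  intros H eps Heps. destruct (H eps Heps) as [d [Hd Hy]].
  exists d; split; [exact Hd|]. intros y [_ Hyx]. exact (Hy y Hyx).
Qed.

Section DecreasingInverse.

Variables (g : R -> R) (a b : R).
Hypothesis a_lt_b : a < b.
Hypothesis g_cont : forall t, a <= t <= b -> continuity_pt g t.
Hypothesis g_decr : forall s t, a <= s -> s < t -> t <= b -> g t < g s.

(* The inverse of [g] on [[g b, g a]], continued by the constant [a] above
   [g a] so that it is continuous at [g a] as well; junk below [g b]. *)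
Definition dec_inv (y : R) : R :=
  epsilon (inhabits a) (fun t => a <= t <= b /\ g t = Rmin y (g a)).

Lemma g_antimono s t : a <= s -> s <= t -> t <= b -> g t <= g s.
Proof.
  intros Hs Hst Ht. destruct (Req_dec s t) as [<-|Hne]; [lra|].
  left; apply g_decr; lra.
Qed.

Lemma g_inj s t : a <= s <= b -> a <= t <= b -> g s = g t -> s = t.
Proof.
  intros Hs Ht Hg. destruct (Rtotal_order s t) as [Hlt|[Heq|Hgt]]; [|exact Heq|].
  - pose proof (g_decr s t ltac:(lra) Hlt ltac:(lra)); lra.
  - pose proof (g_decr t s ltac:(lra) Hgt ltac:(lra)); lra.
Qed.

Lemma dec_inv_spec y :
  g b <= y -> a <= dec_inv y <= b /\ g (dec_inv y) = Rmin y (g a).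
Proof.
  intros Hy. unfold dec_inv. apply epsilon_spec.
  set (z := Rmin y (g a)).
  assert (Hz : g b <= z <= g a).
  { pose proof (g_decr a b ltac:(lra) a_lt_b ltac:(lra)).
    unfold z, Rmin; destruct (Rle_dec y (g a)); lra. }
  destruct (Req_dec z (g a)) as [Ha|Ha]; [exists a; split; [lra|auto]|].
  destruct (Req_dec z (g b)) as [Hb|Hb]; [exists b; split; [lra|auto]|].
  destruct (IVT_interv (fun t => z - g t) a b) as [t [Ht Hgt]]; try lra.
  - intros t Ht.
    exact (continuity_pt_minus (fct_cte z) g t
             (continuity_pt_const (fct_cte z) t (fun _ _ => eq_refl)) (g_cont t Ht)).
  - exists t; split; lra.
Qed.

Lemma dec_inv_eq y : g b <= y <= g a -> g (dec_inv y) = y.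
Proof.
  intros Hy. rewrite (proj2 (dec_inv_spec y ltac:(lra))). apply Rmin_left; lra.
Qed.

Lemma dec_inv_g t : a <= t <= b -> dec_inv (g t) = t.
Proof.
  intros Ht. assert (Hgt : g b <= g t <= g a) by (split; apply g_antimono; lra).
  apply g_inj; [apply dec_inv_spec; lra | exact Ht | apply dec_inv_eq, Hgt].
Qed.

Lemma dec_inv_antimono y y' : g b <= y -> y <= y' -> dec_inv y' <= dec_inv y.
Proof.
  intros Hy Hyy'.
  destruct (dec_inv_spec y Hy) as [Ht Hgt].
  destruct (dec_inv_spec y' ltac:(lra)) as [Ht' Hgt'].
  destruct (Rle_lt_dec (dec_inv y') (dec_inv y)) as [|Hlt]; [assumption|].
  pose proof (g_decr _ _ (proj1 Ht) Hlt (proj2 Ht')).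
  pose proof (Rle_min_compat_r y y' (g a) Hyy'). lra.
Qed.

Lemma dec_inv_le_near y0 e : g b < y0 -> 0 < e ->
  exists d, 0 < d /\ forall y, y0 - d < y -> dec_inv y <= dec_inv y0 + e.
Proof.
  intros Hy0 He. destruct (dec_inv_spec y0 ltac:(lra)) as [Ht0 Hgt0].
  set (t0 := dec_inv y0) in *.
  assert (Ht0b : t0 < b).
  { destruct (Req_dec t0 b) as [Hb|]; [|lra].
    pose proof (g_decr a b ltac:(lra) a_lt_b ltac:(lra)).
    rewrite Hb in Hgt0. unfold Rmin in Hgt0; destruct (Rle_dec y0 (g a)); lra. }
  set (s := t0 + Rmin e (b - t0)).
  assert (Hs : t0 < s <= b /\ s <= t0 + e).
  { unfold s; pose proof (Rmin_l e (b - t0)); pose proof (Rmin_r e (b - t0)).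
    assert (0 < Rmin e (b - t0)) by (apply Rmin_glb_lt; lra). lra. }
  assert (Hgs : g s < y0).
  { pose proof (g_decr t0 s ltac:(lra) ltac:(lra) ltac:(lra)).
    pose proof (Rmin_l y0 (g a)). lra. }
  exists (y0 - g s); split; [lra|].
  intros y Hy.
  assert (Hys : dec_inv y <= dec_inv (g s)) by (apply dec_inv_antimono; [apply g_antimono|]; lra).
  rewrite dec_inv_g in Hys by lra. lra.
Qed.

Lemma dec_inv_ge_near y0 e : g b <= y0 -> 0 < e ->
  exists d, 0 < d /\ forall y, g b <= y -> y < y0 + d -> dec_inv y0 - e <= dec_inv y.
Proof.
  intros Hy0 He. destruct (dec_inv_spec y0 Hy0) as [Ht0 Hgt0].
  set (t0 := dec_inv y0) in *.
  destruct (Req_dec t0 a) as [Ha|Ha].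
  - exists 1; split; [lra|]. intros y Hy _.
    pose proof (proj1 (proj1 (dec_inv_spec y Hy))). lra.
  - assert (Hgy0 : g t0 = y0).
    { rewrite Hgt0. apply Rmin_left.
      destruct (Rle_dec y0 (g a)) as [|Hgt]; [assumption|].
      pose proof (g_decr a t0 ltac:(lra) ltac:(lra) ltac:(lra)).
      rewrite Rmin_right in Hgt0; lra. }
    set (s := t0 - Rmin e (t0 - a)).
    assert (Hs : a <= s < t0 /\ t0 - e <= s).
    { unfold s; pose proof (Rmin_l e (t0 - a)); pose proof (Rmin_r e (t0 - a)).
      assert (0 < Rmin e (t0 - a)) by (apply Rmin_glb_lt; lra). lra. }
    assert (Hgs : y0 < g s) by (rewrite <- Hgy0; apply g_decr; lra).
    exists (g s - y0); split; [lra|].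
    intros y Hy Hys.
    assert (Hsy : dec_inv (g s) <= dec_inv y) by (apply dec_inv_antimono; lra).
    rewrite dec_inv_g in Hsy by lra. lra.
Qed.

Lemma continuity_pt_dec_inv y0 : g b < y0 -> continuity_pt dec_inv y0.
Proof.
  intros Hy0. apply continuity_pt_eps_delta. intros eps Heps.
  destruct (dec_inv_le_near y0 (eps / 2) Hy0 ltac:(lra)) as [d1 [Hd1 H1]].
  destruct (dec_inv_ge_near y0 (eps / 2) ltac:(lra) ltac:(lra)) as [d2 [Hd2 H2]].
  exists (Rmin (Rmin d1 d2) (y0 - g b)); split.
  { repeat apply Rmin_glb_lt; lra. }
  intros y Hy. apply Rabs_def2 in Hy. destruct Hy as [Hy1 Hy2].
  pose proof (Rmin_l (Rmin d1 d2) (y0 - g b)); pose proof (Rmin_r (Rmin d1 d2) (y0 - g b)).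
  pose proof (Rmin_l d1 d2); pose proof (Rmin_r d1 d2).
  specialize (H1 y ltac:(lra)); specialize (H2 y ltac:(lra) ltac:(lra)).
  apply Rabs_def1; lra.
Qed.

Lemma is_RInt_comp_dec_inv (dg phi K : R -> R) (t0 t1 : R) :
  a <= t0 <= t1 -> t1 < b ->
  (forall t, t0 <= t <= t1 -> is_derive g t (dg t) /\ continuous dg t) ->
  (forall t, t0 <= t <= t1 -> continuous phi t) ->
  (forall t, t0 <= t <= t1 -> is_derive K t (dg t * phi t)) ->
  is_RInt (fun y => phi (dec_inv y)) (g t1) (g t0) (K t0 - K t1).
Proof.
  intros Ht Ht1 Hdg Hphi HK.
  set (G := fun y => phi (dec_inv y)).
  assert (HG : forall y, g t1 <= y <= g t0 -> continuous G y).
  { intros y Hy. assert (Hgb : g b < g t1) by (apply g_decr; lra).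
    apply (continuous_comp dec_inv phi).
    - apply continuity_pt_filterlim, continuity_pt_dec_inv. lra.
    - apply Hphi. rewrite <- (dec_inv_g t0), <- (dec_inv_g t1) by lra.
      split; apply dec_inv_antimono; lra. }
  assert (Hcomp : is_RInt (fun t => scal (dg t) (G (g t))) t0 t1 (RInt G (g t0) (g t1))).
  { apply (is_RInt_comp G g dg); rewrite Rmin_left, Rmax_right by lra; intros t Ht'.
    - apply HG. split; apply g_antimono; lra.
    - apply Hdg, Ht'. }
  assert (HFTC : is_RInt (fun t => dg t * phi t) t0 t1 (K t1 - K t0)).
  { apply (is_RInt_derive K (fun t => dg t * phi t)); rewrite Rmin_left, Rmax_right by lra; intros t Ht'.
    - apply HK, Ht'.
    - apply (continuous_mult dg phi); [apply Hdg | apply Hphi]; exact Ht'. }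
  assert (Hval : RInt G (g t0) (g t1) = K t1 - K t0).
  { rewrite <- (is_RInt_unique _ _ _ _ Hcomp). apply is_RInt_unique.
    apply (is_RInt_ext (fun t => dg t * phi t)); [|exact HFTC].
    rewrite Rmin_left, Rmax_right by lra. intros t Ht'.
    unfold G. rewrite dec_inv_g by lra. reflexivity. }
  replace (K t0 - K t1) with (opp (RInt G (g t0) (g t1))) by (rewrite Hval; unfold opp; simpl; ring).
  apply (is_RInt_swap G), (RInt_correct G), (ex_RInt_swap G), (ex_RInt_continuous G).
  rewrite Rmin_left, Rmax_right by (apply g_antimono; lra). exact HG.
Qed.

End DecreasingInverse.

Lemma is_RInt_riemann_int_eq (g : R -> R) (a b l : R) :
  is_RInt g a b l -> riemann_int_eq g a b l.
Proof.
  intros H. exists (ex_RInt_Reals_0 _ _ _ (ex_intro _ l H)).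
  rewrite <- RInt_Reals. exact (is_RInt_unique _ _ _ _ H).
Qed.

Lemma improper_int_0_1_continuous (g G : R -> R) :
  (forall x, 0 <= x < 1 -> is_RInt g 0 x (G x)) -> continuity_pt G 1 ->
  improper_int_0_1 g (G 1).
Proof.
  intros Hint Hcont. split.
  - intros x Hx. destruct (is_RInt_riemann_int_eq _ _ _ _ (Hint x Hx)) as [pr _].
    exact (inhabits pr).
  - intros eps Heps. destruct (Hcont eps Heps) as [d [Hd Hnear]].
    exists (Rmin d 1); split; [apply Rmin_glb_lt; lra|]. intros x pr Hx.
    pose proof (Rmin_l d 1); pose proof (Rmin_r d 1).
    rewrite <- RInt_Reals, (is_RInt_unique _ _ _ _ (Hint x ltac:(lra))).
    apply (Hnear x); split; [split; [exact I | lra]|].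
    simpl; unfold R_dist. rewrite Rabs_left; lra.
Qed.

Lemma sqrt2_sqr : sqrt 2 * sqrt 2 = 2.
Proof. apply sqrt_sqrt; lra. Qed.

Lemma sqrt2_bounds : 1.414 < sqrt 2 < 1.415.
Proof. pose proof sqrt2_sqr; pose proof (sqrt_pos 2); split; nra. Qed.

Lemma cc_bounds : 0.585 < cc < 0.586.
Proof. unfold cc; pose proof sqrt2_bounds; lra. Qed.

(* Clears denominators and proves the remaining polynomial identity modulo
   [sqrt 2 * sqrt 2 = 2] ([nsatz] needs [^] expanded into products); leaves the
   non-vanishing side conditions. *)
Ltac field_sqrt2 :=
  unfold cc; pose proof sqrt2_sqr; field_simplify_eq; [cbn [pow]; nsatz | ..].

Definition ff' (x : R) : R := x * (x - 2) / ((1 - x) ^ 2 * (1 - cc + x)).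

Lemma is_derive_ff x : cc - 1 < x < 1 -> is_derive ff x (ff' x).
Proof.
  intros Hx. pose proof sqrt2_bounds. unfold ff, ff'. auto_derive.
  - repeat split; try lra. apply Rmult_integral_contrapositive; split; lra.
  - field_sqrt2. unfold cc in Hx; repeat split; lra.
Qed.

Lemma continuous_ff' x : cc - 1 < x < 1 -> continuous ff' x.
Proof.
  intros Hx. apply (ex_derive_continuous (K := R_AbsRing) (V := R_NormedModule)).
  unfold ff'. auto_derive. repeat (apply Rmult_integral_contrapositive; split); lra.
Qed.

Lemma continuity_pt_ff x : cc - 1 < x < 1 -> continuity_pt ff x.
Proof.
  intros Hx. apply continuity_pt_filterlim, (ex_derive_continuous (K := R_AbsRing) (V := R_NormedModule)).
  exists (ff' x). exact (is_derive_ff x Hx).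
Qed.

Lemma ff'_neg x : 0 < x < 1 -> ff' x < 0.
Proof.
  intros Hx. pose proof cc_bounds. unfold ff', Rdiv.
  apply Rmult_neg_pos; [nra|]. apply Rinv_0_lt_compat, Rmult_lt_0_compat; [|lra].
  apply pow_lt; lra.
Qed.

Lemma ff_decreasing x y : 0 <= x -> x < y -> y < 1 -> ff y < ff x.
Proof.
  intros Hx Hxy Hy. pose proof cc_bounds.
  destruct (MVT_cor2 ff ff' x y Hxy) as [z [Hz Hz']].
  { intros z Hz. apply is_derive_Reals, is_derive_ff. lra. }
  pose proof (ff'_neg z ltac:(lra)). nra.
Qed.

Lemma ff_0 : ff 0 = 1.
Proof.
  pose proof sqrt2_bounds. unfold ff. rewrite Rminus_0_r, Rplus_0_r, ln_1.
  field_sqrt2. lra.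
Qed.

Lemma ff_cc : ff cc = 0.
Proof.
  pose proof sqrt2_bounds. unfold ff.
  replace (1 - cc + cc) with 1 by ring. rewrite ln_1.
  field_sqrt2. unfold cc; lra.
Qed.


Lemma ff_le x y : 0 <= x -> x <= y -> y < 1 -> ff y <= ff x.
Proof.
  intros Hx Hxy Hy. destruct (Req_dec x y) as [<-|]; [lra|].
  left; apply ff_decreasing; lra.
Qed.

Lemma ff_inj x y : 0 <= x < 1 -> 0 <= y < 1 -> ff x = ff y -> x = y.
Proof.
  intros Hx Hy Hf. destruct (Rtotal_order x y) as [Hlt|[Heq|Hgt]]; [|exact Heq|].
  - pose proof (ff_decreasing x y ltac:(lra) Hlt ltac:(lra)); lra.
  - pose proof (ff_decreasing y x ltac:(lra) Hgt ltac:(lra)); lra.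
Qed.

Lemma ff_range x : 0 <= x <= cc -> 0 <= ff x <= 1.
Proof.
  intros Hx. pose proof cc_bounds. rewrite <- ff_cc, <- ff_0.
  split; apply ff_le; lra.
Qed.

Lemma one_sub_ff_add_ff_cc_sub t : 0 <= t < 1 ->
  1 - ff t + ff (cc - t) = t * (2 - t) / ((1 - t) * (1 - cc + t)).
Proof.
  intros Ht. pose proof cc_bounds. pose proof sqrt2_bounds. unfold ff.
  replace (1 - (cc - t)) with (1 - cc + t) by ring.
  replace (1 - cc + (cc - t)) with (1 - t) by ring.
  field_sqrt2. unfold cc in *; repeat split; lra.
Qed.

Definition ff_antideriv (t : R) : R :=
  / 2 * ((t - 1) * ln (1 - t) + (1 - cc + t) * ln (1 - cc + t)) - t
  + ln (1 - t) / sqrt 2 + (2 + sqrt 2 - ln (1 - cc)) / 2 * t.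

Lemma is_derive_ff_antideriv t : cc - 1 < t < 1 -> is_derive ff_antideriv t (ff t).
Proof.
  intros Ht. pose proof sqrt2_bounds. unfold ff_antideriv, ff. auto_derive.
  - repeat split; lra.
  - replace (1 + - t) with (1 - t) by ring. field. unfold cc in *; repeat split; lra.
Qed.

Lemma ff_antideriv_cc_sub_0 : ff_antideriv cc - ff_antideriv 0 = 1 - cc.
Proof.
  pose proof sqrt2_bounds. unfold ff_antideriv.
  replace (1 - cc + cc) with 1 by ring. rewrite !Rminus_0_r, !Rplus_0_r, ln_1.
  field_sqrt2. lra.
Qed.

Lemma one_add_sqrt2_lt_exp1 : 1 + sqrt 2 < exp 1.
Proof.
  pose proof sqrt2_bounds.
  assert (Hq : 1 + 1/4 < exp (1/4)) by (apply exp_ineq1; lra).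
  replace (exp 1) with (exp (1/4) * exp (1/4) * exp (1/4) * exp (1/4))
    by (rewrite <- !exp_plus; f_equal; field).
  assert (Hsq : 1.5625 < exp (1/4) * exp (1/4)) by nra. nra.
Qed.

Lemma neg1_lt_ln_one_sub_cc : -1 < ln (1 - cc).
Proof.
  pose proof sqrt2_bounds. pose proof one_add_sqrt2_lt_exp1.
  rewrite <- (ln_exp (-1)). apply ln_increasing; [apply exp_pos|].
  replace (exp (-1)) with (/ exp 1) by (rewrite <- exp_Ropp; f_equal; ring).
  unfold cc.
  replace (1 - (2 - sqrt 2)) with (/ (1 + sqrt 2)) by (field_sqrt2; lra).
  apply Rinv_lt_contravar; nra.
Qed.

Lemma ff_decreasing_9_10 s t : 0 <= s -> s < t -> t <= 9/10 -> ff t < ff s.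
Proof. intros; apply ff_decreasing; lra. Qed.

Lemma continuity_pt_ff_9_10 t : 0 <= t <= 9/10 -> continuity_pt ff t.
Proof. intros Ht; pose proof cc_bounds; apply continuity_pt_ff; lra. Qed.

(* [9/10] is any point of [(cc, 1)]: [ff_inv] is then continuous on a
   neighbourhood of [[0, 1]], which the substitution lemma needs. *)
Definition ff_inv : R -> R := dec_inv ff 0 (9/10).

Lemma ff_9_10_neg : ff (9/10) < 0.
Proof. pose proof cc_bounds. rewrite <- ff_cc. apply ff_decreasing; lra. Qed.

Lemma ff_inv_spec y : 0 <= y <= 1 -> 0 <= ff_inv y <= cc /\ ff (ff_inv y) = y.
Proof.
  intros Hy. pose proof ff_9_10_neg. pose proof cc_bounds.
  destruct (dec_inv_spec ff 0 (9/10) ltac:(lra) continuity_pt_ff_9_10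
              ff_decreasing_9_10 y ltac:(lra)) as [Hrange _].
  fold ff_inv in Hrange.
  assert (Heq : ff (ff_inv y) = y).
  { apply (dec_inv_eq ff 0 (9/10) ltac:(lra) continuity_pt_ff_9_10 ff_decreasing_9_10).
    rewrite ff_0; lra. }
  split; [|exact Heq]. split; [apply Hrange|].
  destruct (Rle_lt_dec (ff_inv y) cc) as [|Hlt]; [assumption|].
  pose proof (ff_decreasing cc (ff_inv y) ltac:(lra) Hlt ltac:(lra)).
  rewrite ff_cc in *; lra.
Qed.

Lemma ff_inv_ff t : 0 <= t <= cc -> ff_inv (ff t) = t.
Proof.
  intros Ht. pose proof cc_bounds.
  apply (dec_inv_g ff 0 (9/10) ltac:(lra) continuity_pt_ff_9_10 ff_decreasing_9_10); lra.
Qed.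

Lemma ff_inv_1 : ff_inv 1 = 0.
Proof. pose proof cc_bounds. rewrite <- ff_0. apply ff_inv_ff; lra. Qed.

Lemma continuity_pt_ff_inv y : 0 <= y -> continuity_pt ff_inv y.
Proof.
  intros Hy. pose proof ff_9_10_neg.
  apply (continuity_pt_dec_inv ff 0 (9/10)); [lra | exact continuity_pt_ff_9_10
                                             | exact ff_decreasing_9_10 | lra].
Qed.

Lemma is_RInt_comp_ff_inv (phi K : R -> R) (x : R) :
  0 <= x <= 1 ->
  (forall t, ff_inv x <= t <= cc -> continuous phi t) ->
  (forall t, ff_inv x <= t <= cc -> is_derive K t (ff' t * phi t)) ->
  is_RInt (fun y => phi (ff_inv y)) 0 x (K (ff_inv x) - K cc).
Proof.
  intros Hx Hphi HK. pose proof cc_bounds. destruct (ff_inv_spec x Hx) as [Hrange Hff].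
  rewrite <- ff_cc at 1. rewrite <- Hff at 1.
  apply (is_RInt_comp_dec_inv ff 0 (9/10) ltac:(lra) continuity_pt_ff_9_10
           ff_decreasing_9_10 ff' phi K); try lra; try assumption.
  intros t Ht. split; [apply is_derive_ff | apply continuous_ff']; lra.
Qed.

Section InverseOfFf.

Variable tau : R -> R.
Hypothesis tau_spec : forall y, 0 <= y <= 1 -> 0 <= tau y <= cc /\ ff (tau y) = y.

Lemma tau_ff_inv y : 0 <= y <= 1 -> tau y = ff_inv y.
Proof.
  intros Hy. pose proof cc_bounds.
  destruct (tau_spec y Hy) as [Ht Hft]. destruct (ff_inv_spec y Hy) as [Hi Hfi].
  apply ff_inj; lra.
Qed.

Lemma tau_0 : tau 0 = cc.
Proof.
  pose proof cc_bounds. rewrite tau_ff_inv, <- ff_cc by lra. apply ff_inv_ff; lra.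
Qed.

Lemma tau_1 : tau 1 = 0.
Proof. rewrite tau_ff_inv by lra. exact ff_inv_1. Qed.

Lemma tau_pos y : 0 <= y < 1 -> 0 < tau y.
Proof.
  intros Hy. destruct (tau_spec y ltac:(lra)) as [Ht Hft].
  destruct (Req_dec (tau y) 0) as [H0|]; [|lra].
  rewrite H0, ff_0 in Hft; lra.
Qed.

Lemma tau_decreasing x y : 0 <= x -> x < y -> y <= 1 -> tau y < tau x.
Proof.
  intros Hx Hxy Hy. pose proof cc_bounds.
  destruct (tau_spec x ltac:(lra)) as [Hx' Hfx]. destruct (tau_spec y ltac:(lra)) as [Hy' Hfy].
  destruct (Rlt_le_dec (tau y) (tau x)) as [|Hle]; [assumption|].
  pose proof (ff_le (tau x) (tau y) ltac:(lra) Hle ltac:(lra)). lra.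
Qed.

Lemma hh_range y : 0 <= y <= 1 -> 0 <= hh tau y <= 1.
Proof. intros Hy. unfold hh. apply ff_range. pose proof (tau_spec y Hy). lra. Qed.

Lemma hh_decreasing x y : 0 <= x <= 1 -> 0 <= y <= 1 -> x < y -> hh tau y < hh tau x.
Proof.
  intros Hx Hy Hxy. pose proof cc_bounds. unfold hh.
  pose proof (tau_decreasing x y ltac:(lra) Hxy ltac:(lra)).
  pose proof (tau_spec x Hx). pose proof (tau_spec y Hy).
  apply ff_decreasing; lra.
Qed.

Lemma hh_0 : hh tau 0 = 1.
Proof. unfold hh. rewrite tau_0, Rminus_diag. exact ff_0. Qed.

Lemma hh_1 : hh tau 1 = 0.
Proof. unfold hh. rewrite tau_1, Rminus_0_r. exact ff_cc. Qed.

Lemma one_sub_add_hh y : 0 <= y <= 1 ->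
  1 - y + hh tau y = tau y * (2 - tau y) / ((1 - tau y) * (1 - cc + tau y)).
Proof.
  intros Hy. pose proof cc_bounds. destruct (tau_spec y Hy) as [Ht Hft].
  unfold hh. rewrite <- Hft at 1. apply one_sub_ff_add_ff_cc_sub. lra.
Qed.

Lemma is_RInt_first_identity x : 0 <= x < 1 ->
  is_RInt (fun y => (1 - tau y) / (1 - y + hh tau y)) 0 x (cc - ff_inv x).
Proof.
  intros Hx. pose proof cc_bounds.
  assert (Hpos : 0 < ff_inv x) by (rewrite <- tau_ff_inv by lra; apply tau_pos; lra).
  set (phi := fun t => (1 - t) ^ 2 * (1 - cc + t) / (t * (2 - t))).
  apply (is_RInt_ext (fun y => phi (ff_inv y))).
  - rewrite Rmin_left, Rmax_right by lra. intros y Hy.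
    change (phi (ff_inv y) = (1 - tau y) / (1 - y + hh tau y)).
    pose proof (tau_pos y ltac:(lra)). pose proof (tau_spec y ltac:(lra)).
    rewrite one_sub_add_hh, <- tau_ff_inv by lra. unfold phi.
    field; repeat split; lra.
  - replace (cc - ff_inv x) with (- ff_inv x - - cc) by ring.
    apply (is_RInt_comp_ff_inv phi Ropp); [lra| |].
    + intros t Ht. apply (ex_derive_continuous (K := R_AbsRing) (V := R_NormedModule)).
      unfold phi. auto_derive. apply Rmult_integral_contrapositive; split; lra.
    + intros t Ht. auto_derive; [exact I|]. unfold ff', phi. field; repeat split; lra.
Qed.

(* [t ff t - ff_antideriv t] is a primitive of [t ff' t]: integration by parts. *)
Lemma is_RInt_second_identity : is_RInt tau 0 1 (1 - cc).
Proof.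
  pose proof cc_bounds.
  apply (is_RInt_ext (fun y => ff_inv y)).
  { rewrite Rmin_left, Rmax_right by lra. intros y Hy. symmetry. apply tau_ff_inv; lra. }
  set (K := fun t => t * ff t - ff_antideriv t).
  replace (1 - cc) with (K (ff_inv 1) - K cc)
    by (unfold K; rewrite ff_inv_1, ff_cc, <- ff_antideriv_cc_sub_0; ring).
  apply (is_RInt_comp_ff_inv (fun t => t) K); [lra| |].
  - intros t _. apply continuous_id.
  - intros t Ht. rewrite ff_inv_1 in Ht. unfold K.
    replace (ff' t * t) with (1 * ff t + t * ff' t - ff t) by ring.
    apply (is_derive_minus (fun t => t * ff t) ff_antideriv).
    + apply (is_derive_mult (fun t => t) ff);
        [exact (is_derive_id (K := R_AbsRing) t) | apply is_derive_ff; lra | apply Rmult_comm].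
    + apply is_derive_ff_antideriv; lra.
Qed.

Lemma is_RInt_third_identity x : 0 <= x < 1 ->
  is_RInt (fun y => / (1 - y + hh tau y)) 0 x (ln (1 - ff_inv x) - ln (1 - cc)).
Proof.
  intros Hx. pose proof cc_bounds.
  assert (Hpos : 0 < ff_inv x) by (rewrite <- tau_ff_inv by lra; apply tau_pos; lra).
  set (phi := fun t => (1 - t) * (1 - cc + t) / (t * (2 - t))).
  apply (is_RInt_ext (fun y => phi (ff_inv y))).
  - rewrite Rmin_left, Rmax_right by lra. intros y Hy.
    change (phi (ff_inv y) = / (1 - y + hh tau y)).
    pose proof (tau_pos y ltac:(lra)). pose proof (tau_spec y ltac:(lra)).
    rewrite one_sub_add_hh, <- tau_ff_inv by lra. unfold phi.
    field; repeat split; lra.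
  - apply (is_RInt_comp_ff_inv phi (fun t => ln (1 - t))); [lra| |].
    + intros t Ht. apply (ex_derive_continuous (K := R_AbsRing) (V := R_NormedModule)).
      unfold phi. auto_derive. apply Rmult_integral_contrapositive; split; lra.
    + intros t Ht. auto_derive; [lra|]. unfold ff', phi. field; repeat split; lra.
Qed.

Lemma improper_first_identity :
  improper_int_0_1 (fun y => (1 - tau y) / (1 - y + hh tau y)) (cc - tau 1).
Proof.
  rewrite tau_ff_inv by lra.
  apply (improper_int_0_1_continuous _ (fun x => cc - ff_inv x)).
  - exact is_RInt_first_identity.
  - apply continuity_pt_filterlim, (continuous_comp ff_inv (fun u => cc - u)).
    + apply continuity_pt_filterlim, continuity_pt_ff_inv; lra.
    + apply (ex_derive_continuous (K := R_AbsRing) (V := R_NormedModule)). auto_derive. exact I.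
Qed.

Lemma improper_third_identity :
  improper_int_0_1 (fun y => / (1 - y + hh tau y)) (- ln (1 - cc)).
Proof.
  replace (- ln (1 - cc)) with (ln (1 - ff_inv 1) - ln (1 - cc))
    by (rewrite ff_inv_1, Rminus_0_r, ln_1; ring).
  apply (improper_int_0_1_continuous _ (fun x => ln (1 - ff_inv x) - ln (1 - cc))).
  { exact is_RInt_third_identity. }
  apply continuity_pt_filterlim, (continuous_comp ff_inv (fun u => ln (1 - u) - ln (1 - cc))).
  - apply continuity_pt_filterlim, continuity_pt_ff_inv; lra.
  - apply (ex_derive_continuous (K := R_AbsRing) (V := R_NormedModule)).
    rewrite ff_inv_1. auto_derive. lra.
Qed.

End InverseOfFf.

Theorem lemma3p2 :
  (forall x y, 0 <= x <= cc -> 0 <= y <= cc -> x < y -> ff y < ff x) /\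
  (forall x, 0 <= x <= cc -> 0 <= ff x <= 1) /\
  (forall y, 0 <= y <= 1 -> exists x, 0 <= x <= cc /\ ff x = y) /\
  ff 0 = 1 /\ ff cc = 0 /\
  (forall tau : R -> R,
     (forall y, 0 <= y <= 1 -> 0 <= tau y <= cc /\ ff (tau y) = y) ->
     ((forall y, 0 <= y <= 1 -> 0 <= hh tau y <= 1) /\
      (forall x y, 0 <= x <= 1 -> 0 <= y <= 1 -> x < y -> hh tau y < hh tau x) /\
      hh tau 0 = 1 /\ hh tau 1 = 0) /\
     (forall x, 0 <= x < 1 ->
        riemann_int_eq (fun y => (1 - tau y) / (1 - y + hh tau y)) 0 x (cc - tau x)) /\
     improper_int_0_1 (fun y => (1 - tau y) / (1 - y + hh tau y)) (cc - tau 1) /\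
     riemann_int_eq tau 0 1 (1 - cc) /\
     (exists l, improper_int_0_1 (fun y => / (1 - y + hh tau y)) l /\ l < 1)).
Proof.
  pose proof cc_bounds.
  split; [intros x y Hx Hy Hxy; apply ff_decreasing; lra|].
  split; [exact ff_range|].
  split; [intros y Hy; exists (ff_inv y); exact (ff_inv_spec y Hy)|].
  split; [exact ff_0|]. split; [exact ff_cc|].
  intros tau Htau.
  split; [split; [|split; [|split]]|split; [|split; [|split]]].
  - exact (hh_range tau Htau).
  - exact (hh_decreasing tau Htau).
  - exact (hh_0 tau Htau).
  - exact (hh_1 tau Htau).
  - intros x Hx. rewrite (tau_ff_inv tau Htau x) by lra.
    apply is_RInt_riemann_int_eq, (is_RInt_first_identity tau Htau x Hx).
  - exact (improper_first_identity tau Htau).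
  - apply is_RInt_riemann_int_eq, (is_RInt_second_identity tau Htau).
  - exists (- ln (1 - cc)). split; [exact (improper_third_identity tau Htau)|].
    pose proof neg1_lt_ln_one_sub_cc. lra.
Qed.
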